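(* Let $\mathbb{M}^2$ be a strictly convex normed plane and let $S$ be a set of $n$ points of $\mathbb{M}^2$. For any $\epsilon>0$ there is a point set $S'$ in bijective correspondence with $S$ such that (1) each point of $S'$ is within distance $\epsilon$ (in the norm) of its corresponding point of $S$, and (2) the distances among the points of $S'$ are all distinct.
   Context: $\mathbb{M}^2$ is $\mathbb{R}^2$ with a norm $\|\cdot\|$; it is strictly convex if its unit sphere contains no nondegenerate line segment. *)

From HB Require Import structures.
From mathcomp Require Import all_boot all_order all_algebra.
From mathcomp Require Import reals.
Set Implicit Arguments. Unset Strict Implicit. Unset Printing Implicit Defensive.
Import Order.TTheory GRing.Theory Num.Theory.
Local Open Scope ring_scope.

Definition is_norm2 (R : realType) (N : 'rV[R]_2 -> R) : Prop :=
  [/\ forall x, N x = 0 -> x = 0,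
      forall (a : R) x, N (a *: x) = `|a| * N x
    & forall x y, N (x + y) <= N x + N y].

Definition strictly_convex2 (R : realType) (N : 'rV[R]_2 -> R) : Prop :=
  forall x y : 'rV[R]_2, x != y ->
    ~ (forall t : R, 0 <= t <= 1 -> N ((1 - t) *: x + t *: y) = 1).

From HB Require Import structures.
From mathcomp Require Import all_boot all_order all_algebra.
From mathcomp Require Import reals.
From mathcomp Require Import ring lra.
Set Implicit Arguments. Unset Strict Implicit. Unset Printing Implicit Defensive.
Import Order.TTheory GRing.Theory Num.Theory.
Local Open Scope ring_scope.

(* The points are placed one at a time.  A new point must avoid finitely many
   spheres (centred at earlier points, with an already realised distance, or 0,
   as radius) and the bisectors of pairs of earlier points.  For a strictly
   convex norm, [t |-> N (w + t u)] is convex and constant on no interval, so a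
   line meets a sphere in at most two points, and a line parallel to [d - c]
   meets the bisector of [c] and [d] in points at least [N (d - c)] apart.
   Hence every forbidden set has an open dense complement, and the new point
   can be chosen in a finite intersection of such complements, as close as
   wanted to the original one. *)

Definition convex_fun (R : numDomainType) (f : R -> R) :=
  forall a b s, 0 <= s <= 1 -> f ((1 - s) * a + s * b) <= (1 - s) * f a + s * f b.

Section ConvexFun.
Variables (R : realFieldType) (f : R -> R).
Hypothesis f_convex : convex_fun f.

Lemma convex_sublevel a b x r :
  a <= x <= b -> f a <= r -> f b <= r -> f x <= r.
Proof.
move=> /andP[ax xb] fa fb.
have [ab|ba] := ltrP a b; last by have -> : x = a by apply/le_anti; rewrite ax (le_trans xb).
pose s := (x - a) / (b - a).
have s01 : 0 <= s <= 1.
  by rewrite divr_ge0 ?subr_ge0 ?(ltW ab) //= ler_pdivrMr ?subr_gt0 //; lra.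
have -> : x = (1 - s) * a + s * b by rewrite /s; field; rewrite subr_eq0 gt_eqF.
apply: le_trans (f_convex a b s01) _.
case/andP: s01 => s0 s1; nra.
Qed.

Lemma convex_eq3_segment t1 t2 t3 r :
  t1 < t2 -> t2 < t3 -> f t1 = r -> f t2 = r -> f t3 = r ->
  forall t, t1 <= t <= t2 -> f t = r.
Proof.
move=> lt12 lt23 f1 f2 f3 t /andP[t1t tt2].
apply/le_anti/andP; split.
  by apply: (convex_sublevel (a := t1) (b := t2)); rewrite ?t1t ?tt2 ?f1 ?f2.
have tt3 : t < t3 by apply: le_lt_trans lt23.
pose s := (t2 - t) / (t3 - t).
have s0 : 0 <= s by rewrite divr_ge0 ?subr_ge0 // ltW.
have s1 : s < 1 by rewrite ltr_pdivrMr ?subr_gt0 //; lra.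
have t2E : t2 = (1 - s) * t + s * t3 by rewrite /s; field; rewrite subr_eq0 gt_eqF.
have := f_convex t t3 (s := s); rewrite s0 (ltW s1) -t2E f2 f3 => /(_ isT) ?.
nra.
Qed.

End ConvexFun.

Lemma subrBB (V : zmodType) (x y z : V) : (x - z) - (y - z) = x - y.
Proof. by rewrite opprB addrA subrK. Qed.

Lemma ltnS_split m n : (m < n.+1)%N -> m = n \/ (m < n)%N.
Proof. by rewrite ltnS leq_eqVlt => /predU1P. Qed.

Section NormedPlane.
Variables (R : realType) (N : 'rV[R]_2 -> R).
Hypothesis HN : is_norm2 N.

Lemma norm2_eq0 x : N x = 0 -> x = 0. Proof. by case: HN => /(_ x). Qed.

Lemma norm2Z a x : N (a *: x) = `|a| * N x. Proof. by case: HN => _ /(_ a x). Qed.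

Lemma norm2_triangle x y : N (x + y) <= N x + N y. Proof. by case: HN => _ _ /(_ x y). Qed.

Lemma norm2_0 : N 0 = 0.
Proof. by rewrite -(scale0r 0) norm2Z normr0 mul0r. Qed.

Lemma norm2N x : N (- x) = N x.
Proof. by rewrite -scaleN1r norm2Z normrN normr1 mul1r. Qed.

Lemma norm2_ge0 x : 0 <= N x.
Proof. by have := norm2_triangle x (- x); rewrite subrr norm2_0 norm2N; lra. Qed.

Lemma norm2_gt0 x : x != 0 -> 0 < N x.
Proof. by move=> x0; rewrite lt_def norm2_ge0 andbT; apply: contra_neq x0 => /norm2_eq0. Qed.

Lemma dist2C x y : N (x - y) = N (y - x).
Proof. by rewrite -norm2N opprB. Qed.

Lemma dist2_triangle x y z : N (x - z) <= N (x - y) + N (y - z).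
Proof.
have -> : x - z = (x - y) + (y - z) by rewrite addrA subrK.
exact: norm2_triangle.
Qed.

Lemma norm2_lipschitz x y : `|N x - N y| <= N (x - y).
Proof.
have := dist2_triangle x y 0; have := dist2_triangle y x 0.
rewrite !subr0 ler_norml dist2C => ? ?; apply/andP; split; lra.
Qed.

Lemma convex_norm2_line w u : convex_fun (fun t => N (w + t *: u)).
Proof.
move=> a b s /andP[s0 s1].
have -> : w + ((1 - s) * a + s * b) *: u = (1 - s) *: (w + a *: u) + s *: (w + b *: u).
  by apply/rowP => i; rewrite !mxE; ring.
by apply: le_trans (norm2_triangle _ _) _; rewrite !norm2Z !ger0_norm ?subr_ge0.
Qed.

Hypothesis Hsc : strictly_convex2 N.

Lemma norm2_line_nonconst w u a b r : u != 0 -> a < b ->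
  ~ (forall t, a <= t <= b -> N (w + t *: u) = r).
Proof.
move=> u0 ab Nr.
have Na : N (w + a *: u) = r by apply: Nr; rewrite lexx ltW.
have Nb : N (w + b *: u) = r by apply: Nr; rewrite lexx ltW.
have ends_neq : w + a *: u != w + b *: u.
  apply: contraTneq ab => /addrI /eqP; rewrite -subr_eq0 -scalerBl scaler_eq0.
  by rewrite (negbTE u0) orbF subr_eq0 => /eqP ->; rewrite ltxx.
have [r0|r_neq0] := eqVneq r 0.
  by move: ends_neq; rewrite (norm2_eq0 (etrans Na r0)) (norm2_eq0 (etrans Nb r0)) eqxx.
have r_gt0 : 0 < r by rewrite lt_def r_neq0 -Na norm2_ge0.
apply: (Hsc (x := r^-1 *: (w + a *: u)) (y := r^-1 *: (w + b *: u))).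
  by rewrite (inj_eq (scalerI _)) ?invr_eq0.
move=> t /andP[t0 t1].
have -> : (1 - t) *: (r^-1 *: (w + a *: u)) + t *: (r^-1 *: (w + b *: u))
    = r^-1 *: (w + ((1 - t) * a + t * b) *: u).
  by apply/rowP => i; rewrite !mxE; ring.
rewrite norm2Z Nr; last by apply/andP; split; nra.
by rewrite ger0_norm ?invr_ge0 ?ltW // mulVf.
Qed.

Lemma no_three_equidistant_on_line w u t1 t2 t3 r : u != 0 -> t1 < t2 -> t2 < t3 ->
  N (w + t1 *: u) = r -> N (w + t2 *: u) = r -> N (w + t3 *: u) = r -> False.
Proof.
move=> u0 lt12 lt23 N1 N2 N3.
exact: (norm2_line_nonconst u0 lt12
  (convex_eq3_segment (convex_norm2_line w u) lt12 lt23 N1 N2 N3)).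
Qed.

(* The hypotheses put [w + t1 *: u] and [w + t2 *: u] on the bisector of [0] and [u]. *)
Lemma bisector_line_sparse w u t1 t2 : u != 0 -> t1 < t2 -> t2 < t1 + 1 ->
  N (w + t1 *: u) = N (w + (t1 - 1) *: u) ->
  N (w + t2 *: u) = N (w + (t2 - 1) *: u) -> False.
Proof.
move=> u0 lt12 lt21 N1 N2.
have le1 : N (w + (t2 - 1) *: u) <= N (w + t1 *: u).
  apply: (convex_sublevel (convex_norm2_line w u) (a := t1 - 1) (b := t1)).
  - by apply/andP; split; lra.
  - by rewrite N1.
  - by [].
have le2 : N (w + t1 *: u) <= N (w + (t2 - 1) *: u).
  apply: (convex_sublevel (convex_norm2_line w u) (a := t2 - 1) (b := t2)).
  - by apply/andP; split; lra.
  - by [].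
  - by rewrite N2.
have N21 : N (w + (t2 - 1) *: u) = N (w + t1 *: u) by apply/le_anti; rewrite le1 le2.
by apply: (no_three_equidistant_on_line (t1 := t2 - 1) (t2 := t1) (t3 := t2) u0 _ _ N21)
  => //; lra.
Qed.

Definition norm2_open (P : 'rV[R]_2 -> Prop) :=
  forall y, P y -> exists2 e, 0 < e & forall z, N (z - y) < e -> P z.

Definition norm2_dense (P : 'rV[R]_2 -> Prop) :=
  forall p e, 0 < e -> exists2 y, N (y - p) < e & P y.

(* The interior of [P] is dense. *)
Definition generic (P : 'rV[R]_2 -> Prop) :=
  forall p e, 0 < e -> exists q e', 0 < e' /\
    forall y, N (y - q) < e' -> N (y - p) < e /\ P y.

Lemma generic_open_dense P : norm2_open P -> norm2_dense P -> generic P.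
Proof.
move=> P_open P_dense p e e_gt0.
have [y yp Py] := P_dense p e e_gt0.
have [e' e'_gt0 ballP] := P_open y Py.
exists y, (Num.min e' (e - N (y - p))); split; first by rewrite lt_min e'_gt0 subr_gt0.
move=> z; rewrite lt_min => /andP[zy zy']; split; last exact: ballP.
by have := dist2_triangle z y p; lra.
Qed.

Lemma generic_true : generic (fun _ => True).
Proof. by move=> p e e_gt0; exists p, e. Qed.

Lemma generic_sub (P Q : 'rV[R]_2 -> Prop) :
  (forall y, P y -> Q y) -> generic P -> generic Q.
Proof.
move=> PQ P_gen p e e_gt0; have [q [e' [e'_gt0 ballP]]] := P_gen p e e_gt0.
by exists q, e'; split=> // y /ballP[? /PQ].
Qed.

Lemma generic_and P Q : generic P -> generic Q -> generic (fun y => P y /\ Q y).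
Proof.
move=> P_gen Q_gen p e e_gt0.
have [q1 [e1 [e1_gt0 ballP]]] := P_gen p e e_gt0.
have [q2 [e2 [e2_gt0 ballQ]]] := Q_gen q1 e1 e1_gt0.
by exists q2, e2; split=> // y /ballQ[/ballP[? ?] ?].
Qed.

Lemma generic_implies (b : bool) P : (b -> generic P) -> generic (fun y => b -> P y).
Proof.
case: b => [/(_ isT)|_]; first exact: generic_sub.
by apply: (generic_sub _ generic_true) => y _.
Qed.

Lemma generic_all (c : nat) (P : nat -> 'rV[R]_2 -> Prop) :
  (forall i, (i < c)%N -> generic (P i)) ->
  generic (fun y => forall i, (i < c)%N -> P i y).
Proof.
elim: c => [|c IHc] P_gen; first by apply: (generic_sub _ generic_true).
apply: (generic_sub _ (generic_and (IHc _) (P_gen c _))) => // [y [Py Pcy] i|i ic].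
  by move=> /ltnS_split[->|]; [exact: Pcy | exact: Py].
exact/P_gen/ltnW.
Qed.

Lemma open_nonzero (g : 'rV[R]_2 -> R) L : 0 < L ->
  (forall y z, `|g y - g z| <= L * N (y - z)) -> norm2_open (fun y => g y != 0).
Proof.
move=> L_gt0 g_lip y gy0; exists (`|g y| / L); first by rewrite divr_gt0 ?normr_gt0.
move=> z; rewrite ltr_pdivlMr // => zy; apply/eqP => gz0.
by have := g_lip y z; rewrite gz0 subr0 dist2C; lra.
Qed.

Lemma dense_nonzero_line (g : 'rV[R]_2 -> R) u : u != 0 ->
  (forall w t1 t2 t3, t1 < t2 -> t2 < t3 -> t3 - t1 < 1 ->
     g (w + t1 *: u) = 0 -> g (w + t2 *: u) = 0 -> g (w + t3 *: u) = 0 -> False) ->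
  norm2_dense (fun y => g y != 0).
Proof.
move=> u0 sparse_zeros p e e_gt0.
have Nu_gt0 := norm2_gt0 u0.
pose d := Num.min (e / (4 * N u)) (1 / 4).
have d_gt0 : 0 < d by rewrite lt_min !divr_gt0 ?mulr_gt0.
have d_le : d <= 1 / 4 by rewrite ge_min lexx orbT.
have dNu : d * N u <= e / 4.
  have : d <= e / (4 * N u) by rewrite ge_min lexx.
  by rewrite ler_pdivlMr ?mulr_gt0 //; lra.
have [t [t0 t3d gt0]] : exists t, [/\ 0 <= t, t <= 3 * d & g (p + t *: u) != 0].
  have [g1|g1] := eqVneq (g (p + d *: u)) 0; last by exists d; split=> //; lra.
  have [g2|g2] := eqVneq (g (p + (2 * d) *: u)) 0; last by exists (2 * d); split=> //; lra.
  have [g3|g3] := eqVneq (g (p + (3 * d) *: u)) 0; last by exists (3 * d); split=> //; lra.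
  by exfalso; apply: (sparse_zeros p d (2 * d) (3 * d)) => //; lra.
exists (p + t *: u) => //.
by rewrite addrAC subrr add0r norm2Z ger0_norm //; nra.
Qed.

Lemma generic_sphere_compl c r : generic (fun y => N (y - c) != r).
Proof.
have u0 : const_mx 1 != 0 :> 'rV[R]_2.
  by apply/eqP => /rowP /(_ 0); rewrite !mxE; apply/eqP/oner_neq0.
apply: (@generic_sub (fun y => N (y - c) - r != 0)); first by move=> y; rewrite subr_eq0.
apply: generic_open_dense.
  apply: (open_nonzero (L := 1)) => // y z.
  by rewrite subrBB mul1r; apply: le_trans (norm2_lipschitz _ _) _; rewrite subrBB.
apply: (dense_nonzero_line u0) => w t1 t2 t3 lt12 lt23 _.
have lineE t : w + t *: const_mx 1 - c = (w - c) + t *: const_mx 1 by rewrite addrAC.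
rewrite !lineE => /subr0_eq N1 /subr0_eq N2 /subr0_eq N3.
exact: no_three_equidistant_on_line u0 lt12 lt23 N1 N2 N3.
Qed.

Lemma generic_bisector_compl c d : c != d -> generic (fun y => N (y - c) != N (y - d)).
Proof.
move=> cd; have u0 : d - c != 0 by rewrite subr_eq0 eq_sym.
apply: (@generic_sub (fun y => N (y - c) - N (y - d) != 0)).
  by move=> y; rewrite subr_eq0.
apply: generic_open_dense.
  apply: (open_nonzero (L := 2)) => // y z.
  have -> : N (y - c) - N (y - d) - (N (z - c) - N (z - d))
      = (N (y - c) - N (z - c)) - (N (y - d) - N (z - d)) by ring.
  apply: le_trans (ler_normB _ _) _.
  have := norm2_lipschitz (y - c) (z - c); have := norm2_lipschitz (y - d) (z - d).
  by rewrite !subrBB; lra.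
apply: (dense_nonzero_line u0) => w t1 t2 t3 lt12 lt23 lt31.
have lineEc t : w + t *: (d - c) - c = (w - c) + t *: (d - c) by rewrite addrAC.
have lineEd t : w + t *: (d - c) - d = (w - c) + (t - 1) *: (d - c).
  by apply/rowP => i; rewrite !mxE; ring.
rewrite !lineEc !lineEd => /subr0_eq N1 /subr0_eq N2 _.
by apply: (bisector_line_sparse u0 lt12 _ N1 N2); lra.
Qed.

Variables (X : nat -> 'rV[R]_2) (eps : R).
Hypothesis eps_gt0 : 0 < eps.

Definition good_config (T : nat -> 'rV[R]_2) m :=
  [/\ forall i, (i < m)%N -> N (T i - X i) < eps,
      forall i j, (i < m)%N -> (j < m)%N -> T i = T j -> i = j
    & forall i j k l, (i < j)%N -> (j < m)%N -> (k < l)%N -> (l < m)%N ->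
        (i, j) != (k, l) -> N (T i - T j) != N (T k - T l)].

(* Taking [a = b] in the first clause makes [q] differ from every [T j]. *)
Definition fresh_point (T : nat -> 'rV[R]_2) m q :=
  (forall j, (j < m)%N -> forall a, (a < m)%N -> forall b, (b < m)%N ->
     N (q - T j) != N (T a - T b))
  /\ (forall j, (j < m)%N -> forall k, (k < m)%N -> T j != T k ->
     N (q - T j) != N (q - T k)).

Definition extend (T : nat -> 'rV[R]_2) m q i := if i == m then q else T i.

Lemma generic_fresh_point T m : generic (fresh_point T m).
Proof.
apply: generic_and; apply: generic_all => j _; apply: generic_all => k _.
  by apply: generic_all => b _; apply: generic_sphere_compl.
by apply: generic_implies; apply: generic_bisector_compl.
Qed.

Lemma good_config_extend T m q :
  good_config T m -> fresh_point T m q -> N (q - X m) < eps ->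
  good_config (extend T m q) m.+1.
Proof.
move=> [T_near T_inj T_dist] [q_dist q_bisect] q_near.
have extE i : (i < m)%N -> extend T m q i = T i by move=> im; rewrite /extend ltn_eqF.
have extm : extend T m q m = q by rewrite /extend eqxx.
have q_neq j : (j < m)%N -> q != T j.
  by move=> jm; apply: contra_neq (q_dist j jm j jm j jm) => ->.
split.
- move=> i /ltnS_split[->|im]; first by rewrite extm.
  by rewrite extE //; apply: T_near.
- move=> i j /ltnS_split[->|im] /ltnS_split[->|jm] //; rewrite ?extm ?extE //.
  + by move=> /eqP; rewrite (negbTE (q_neq _ jm)).
  + by move=> /esym /eqP; rewrite (negbTE (q_neq _ im)).
  + exact: T_inj.
move=> i j k l; wlog lj : i j k l / (l <= j)%N.
  move=> wlog_lj ij jm kl lm ne; have [lj|jl] := leqP l j; first exact: wlog_lj.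
  by rewrite eq_sym; apply: wlog_lj => //; [exact: ltnW | rewrite eq_sym].
move=> ij /ltnS_split[jE|jm] kl lm ne; last first.
  have lm' := leq_ltn_trans lj jm.
  have im := ltn_trans ij jm; have km := ltn_trans kl lm'.
  by rewrite !extE //; apply: T_dist.
subst j; rewrite extm (extE i ij) dist2C.
move: lm => /ltnS_split[lE|lm].
  subst l; rewrite extm (extE k kl) (dist2C (T k)); apply: q_bisect => //.
  by apply: contra_neq ne => /T_inj -> //.
have km := ltn_trans kl lm.
by rewrite !extE //; apply: q_dist.
Qed.

Lemma good_config_exists m : exists T, good_config T m.
Proof.
elim: m => [|m [T T_good]]; first by exists X; split.
have [q [e [e_gt0 ball_fresh]]] := generic_fresh_point T m (X m) eps_gt0.
have [q_near q_fresh] := ball_fresh q ltac:(by rewrite subrr norm2_0).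
by exists (extend T m q); apply: good_config_extend.
Qed.

End NormedPlane.

Theorem proposition6p2 (R : realType) (N : 'rV[R]_2 -> R)
    (HN : is_norm2 N) (Hsc : strictly_convex2 N)
    (n : nat) (S : 'I_n -> 'rV[R]_2) (HS : injective S)
    (eps : R) (Heps : 0 < eps) :
  exists S' : 'I_n -> 'rV[R]_2,
    [/\ injective S',
        (forall i, N (S' i - S i) < eps)
      & forall i j k l : 'I_n, (i < j)%N -> (k < l)%N -> (i, j) != (k, l) ->
          N (S' i - S' j) != N (S' k - S' l)].
Proof.
pose X i := oapp S 0 (insub i).
have [T [T_near T_inj T_dist]] := good_config_exists HN Hsc X Heps n.
exists (fun i => T (val i)); split.
- by move=> i j /(T_inj _ _ (ltn_ord i) (ltn_ord j)) /val_inj.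
- by move=> i; have := T_near i (ltn_ord i); rewrite /X valK.
- by move=> i j k l ij kl ne; apply: T_dist => //; apply: ltn_ord.
Qed.
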